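(* Let $\mathcal{F}$ be the family of $1$-Lipschitz functions from $[0,1]$ to $[-1,1]$. There is a universal constant $C$ such that $\mathfrak{R}_T(\mathcal{F}) \le C\sqrt{T}$ for every positive integer $T$.
   Context: The sequential Rademacher complexity of a family $\mathcal{F}$ of functions on $[0,1]$ is $\mathfrak{R}_T(\mathcal{F}) = \sup_{z_1,\ldots,z_T} \mathbb{E}_{\sigma \sim \{\pm 1\}^T}\left[\sup_{f \in \mathcal{F}} \sum_{t=1}^T \sigma_t f(z_t(\sigma_1,\ldots,\sigma_{t-1}))\right]$, where $\sigma$ is uniform on $\{\pm1\}^T$ and the outer supremum is over all tuples $(z_1,\ldots,z_T)$ with $z_t : \{\pm1\}^{t-1} \to [0,1]$. *)

From HB Require Import structures.
From mathcomp Require Import all_boot all_order all_algebra.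
From mathcomp Require Import all_classical all_reals.
Set Implicit Arguments. Unset Strict Implicit. Unset Printing Implicit Defensive.
Import Order.TTheory GRing.Theory Num.Theory.
Local Open Scope classical_set_scope.
Local Open Scope ring_scope.

Section SeqRad.
Variable R : realType.

Definition sgnb (b : bool) : R := if b then 1 else -1.

Definition lip_class : set (R -> R) :=
  [set f | (forall x y : R, 0 <= x <= 1 -> 0 <= y <= 1 -> `|f x - f y| <= `|x - y|)
        /\ (forall x : R, 0 <= x <= 1 -> -1 <= f x <= 1)].

(* A [0,1]-valued tree of depth T: z t s is z_{t+1}(sigma_1..sigma_t)
   for the prefix s of length t (0-based index t < T). *)
Definition is_tree (T : nat) (z : nat -> seq bool -> R) : Prop :=
  forall (t : nat) (s : seq bool), (t < T)%N -> size s = t -> 0 <= z t s <= 1.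

Definition seq_payoff (T : nat) (z : nat -> seq bool -> R) (f : R -> R)
  (sigma : T.-tuple bool) : R :=
  \sum_(t < T) sgnb (tnth sigma t) * f (z t (take t sigma)).

Definition inner_sup (F : set (R -> R)) (T : nat) (z : nat -> seq bool -> R)
  (sigma : T.-tuple bool) : R :=
  sup [set seq_payoff z f sigma | f in F].

Definition rad_avg (F : set (R -> R)) (T : nat) (z : nat -> seq bool -> R) : R :=
  (2 ^+ T)^-1 * \sum_(sigma : T.-tuple bool) inner_sup F z sigma.

Definition seq_rademacher (F : set (R -> R)) (T : nat) : R :=
  sup [set rad_avg F T z | z in is_tree T].

End SeqRad.

(* Discretize at scale 1/T: on [0,1] a 1-Lipschitz f is within 1/T of the
   staircase x |-> f(i/T), i = floor(T x), a combination of the threshold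
   indicators [i/T <= x] with coefficients f(0) and f(i/T) - f((i-1)/T), the
   latter of size at most 1/T.  The payoff of the staircase along a tree is thus
   the same combination of T + 1 martingale sums M_i that do not depend on f,
   and E M_i^2 <= T gives E |M_i| <= sqrt T.  Hence
   E sup_f payoff <= sqrt T + T (1/T) sqrt T + T (1/T) <= 3 sqrt T. *)

From HB Require Import structures.
From mathcomp Require Import all_boot all_order all_algebra.
From mathcomp Require Import all_classical all_reals.
From mathcomp Require Import ring lra.

Set Implicit Arguments.
Unset Strict Implicit.
Unset Printing Implicit Defensive.
Import Order.TTheory GRing.Theory Num.Theory.
Local Open Scope ring_scope.

Lemma big_tuple_cons (X : finType) (V : nmodType) n (F : n.+1.-tuple X -> V) :
  \sum_(u : n.+1.-tuple X) F u = \sum_(x : X) \sum_(s : n.-tuple X) F [tuple of x :: s].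
Proof.
rewrite pair_big /=.
rewrite (reindex (fun p : X * n.-tuple X => [tuple of p.1 :: p.2])) /=.
  by apply: eq_bigr => -[x s].
exists (fun u => (thead u, [tuple of behead u])) => [[x s] _ | u _] /=.
  by congr pair; apply/val_inj.
by rewrite -tuple_eta.
Qed.

Section MartingaleSums.
Variable R : realType.
Implicit Types (a b : nat -> seq bool -> R).

(* The weight [a t p] sees only the prefix [p] of past signs, so [mgale_sum a]
   is a martingale transform of the Rademacher walk. *)
Definition mgale_sum T a (s : T.-tuple bool) : R :=
  \sum_(t < T) sgnb R (tnth s t) * a t (take t s).

Lemma mgale_sum0 a (s : 0.-tuple bool) : mgale_sum a s = 0.
Proof. by rewrite /mgale_sum big_ord0. Qed.

Lemma mgale_sum_cons T a x (s : T.-tuple bool) :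
  mgale_sum a [tuple of x :: s] =
  sgnb R x * a 0%N [::] + mgale_sum (fun t p => a t.+1 (x :: p)) s.
Proof.
rewrite /mgale_sum big_ord_recl; congr (_ + _).
by apply: eq_bigr => t _; rewrite tnthS.
Qed.

Lemma mgale_sumD T a b (s : T.-tuple bool) :
  mgale_sum (fun t p => a t p + b t p) s = mgale_sum a s + mgale_sum b s.
Proof. by rewrite /mgale_sum -big_split; apply: eq_bigr => t _; rewrite mulrDr. Qed.

Lemma mgale_sum_lin T (I : Type) (r : seq I) (c : I -> R)
    (a : I -> nat -> seq bool -> R) (s : T.-tuple bool) :
  mgale_sum (fun t p => \sum_(i <- r) c i * a i t p) s
  = \sum_(i <- r) c i * mgale_sum (a i) s.
Proof.
rewrite /mgale_sum; under eq_bigr do rewrite mulr_sumr.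
rewrite exchange_big; apply: eq_bigr => i _; rewrite mulr_sumr.
by apply: eq_bigr => t _; rewrite mulrCA.
Qed.

Lemma norm_mgale_sum_le T a (c : R) (s : T.-tuple bool) :
  (forall t p, (t < T)%N -> size p = t -> `|a t p| <= c) ->
  `|mgale_sum a s| <= T%:R * c.
Proof.
move=> a_le; apply: (le_trans (ler_norm_sum _ _ _)).
rewrite mulr_natl -[T in _ *+ T]card_ord -sumr_const; apply: ler_sum => t _.
rewrite normrM; have -> : `|sgnb R (tnth s t)| = 1.
  by rewrite /sgnb; case: (tnth s t); rewrite ?normrN normr1.
by rewrite mul1r a_le // size_takel // size_tuple ltnW.
Qed.

Lemma sum_const_tuple T (c : R) : \sum_(s : T.-tuple bool) c = 2 ^+ T * c.
Proof. by rewrite sumr_const card_tuple card_bool -[c *+ _]mulr_natl natrX. Qed.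

Lemma sum_mgale_sum_eq0 T a : \sum_(s : T.-tuple bool) mgale_sum a s = 0.
Proof.
elim: T a => [|T IH] a; first by apply: big1 => s _; rewrite mgale_sum0.
rewrite big_tuple_cons big_bool /=.
under eq_bigr do rewrite mgale_sum_cons.
under [X in _ + X]eq_bigr do rewrite mgale_sum_cons.
by rewrite !big_split /= !IH !addr0 !sum_const_tuple /sgnb; ring.
Qed.

Lemma sum_mgale_sum_sqr_le T a : (forall t p, `|a t p| <= 1) ->
  \sum_(s : T.-tuple bool) mgale_sum a s ^+ 2 <= 2 ^+ T * T%:R.
Proof.
elim: T a => [|T IH] a a_le1.
  by rewrite big1 ?mulr0 // => s _; rewrite mgale_sum0 expr0n.
have c2_le1 : a 0%N [::] ^+ 2 <= 1.
  by rewrite -real_normK ?num_real // expr_le1 ?a_le1.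
(* The cross term vanishes because the continuation sums have mean zero. *)
have half_le x : \sum_(s : T.-tuple bool) mgale_sum a [tuple of x :: s] ^+ 2
                 <= 2 ^+ T * (T%:R + 1).
  under eq_bigr do rewrite mgale_sum_cons sqrrD.
  rewrite !big_split /= -!mulr_sumr sum_mgale_sum_eq0 mulr0 !addr0.
  rewrite sum_const_tuple.
  have := IH _ (fun t p => a_le1 t.+1 (x :: p)).
  have := ler_wpM2l (exprn_ge0 T (ler0n R 2)) c2_le1.
  by rewrite /sgnb; case: x; rewrite mulr1 expr2; nra.
rewrite big_tuple_cons big_bool /= exprS -natr1.
have := exprn_ge0 T (ler0n R 2).
have := half_le true; have := half_le false; lra.
Qed.

Lemma sum_norm_mgale_sum_le T a : (forall t p, `|a t p| <= 1) ->
  \sum_(s : T.-tuple bool) `|mgale_sum a s| <= 2 ^+ T * Num.sqrt T%:R.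
Proof.
case: T a => [|T] a a_le1.
  by rewrite big1 ?sqrtr0 ?mulr0 // => s _; rewrite mgale_sum0 normr0.
set q := Num.sqrt T.+1%:R.
have q_gt0 : 0 < q by rewrite sqrtr_gt0 ltr0n.
have qq : q ^+ 2 = T.+1%:R by rewrite sqr_sqrtr // ler0n.
have amgm (s : T.+1.-tuple bool) :
    2 * q * `|mgale_sum a s| <= mgale_sum a s ^+ 2 + q ^+ 2.
  rewrite -real_normK ?num_real //.
  by have := sqr_ge0 (`|mgale_sum a s| - q); lra.
have sum_amgm : \sum_(s : T.+1.-tuple bool) 2 * q * `|mgale_sum a s|
                 <= \sum_(s : T.+1.-tuple bool) (mgale_sum a s ^+ 2 + q ^+ 2).
  by apply: ler_sum => s _; apply: amgm.
rewrite -mulr_sumr big_split /= sum_const_tuple in sum_amgm.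
have sum_sqr_le : \sum_(s : T.+1.-tuple bool) mgale_sum a s ^+ 2 <= 2 ^+ T.+1 * q ^+ 2.
  by rewrite qq; apply: sum_mgale_sum_sqr_le.
rewrite -(ler_pM2l (_ : 0 < 2 * q)) ?mulr_gt0 //; apply: (le_trans sum_amgm).
have -> : 2 * q * (2 ^+ T.+1 * q) = 2 ^+ T.+1 * q ^+ 2 + 2 ^+ T.+1 * q ^+ 2 by ring.
by rewrite lerD2r.
Qed.

End MartingaleSums.

Section Staircase.
Variables (R : realType) (N : nat).
Hypothesis N_gt0 : (0 < N)%N.

Definition threshold (i : nat) (x : R) : R := if i%:R / N%:R <= x then 1 else 0.

Definition stair_coef (f : R -> R) (i : nat) : R :=
  f (i%:R / N%:R) - (if i is j.+1 then f (j%:R / N%:R) else 0).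

Definition staircase (f : R -> R) (x : R) : R :=
  \sum_(0 <= i < N.+1) stair_coef f i * threshold i x.

Lemma norm_threshold_le1 i x : `|threshold i x| <= 1.
Proof. by rewrite /threshold; case: ifP; rewrite ?normr1 ?normr0. Qed.

Lemma sum_stair_coef (f : R -> R) k :
  \sum_(0 <= i < k.+1) stair_coef f i = f (k%:R / N%:R).
Proof.
elim: k => [|k IH]; first by rewrite big_nat1 /stair_coef subr0.
by rewrite big_nat_recr //= IH /stair_coef addrC subrK.
Qed.

Lemma grid_in01 i : (i <= N)%N -> 0 <= (i%:R / N%:R : R) <= 1.
Proof.
move=> le_iN; rewrite divr_ge0 //=.
by rewrite ler_pdivrMr ?ltr0n // mul1r ler_nat.
Qed.

Lemma truncn_grid_le (x : R) : 0 <= x <= 1 -> (Num.truncn (x * N%:R) <= N)%N.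
Proof.
case/andP=> x_ge0 x_le1; rewrite truncn_le_nat.
by apply: (le_lt_trans (y := N%:R)); rewrite ?ltr_nat // ler_piMl.
Qed.

(* Exactly the thresholds i <= floor (N x) are crossed at x. *)
Lemma staircaseE (f : R -> R) (x : R) : 0 <= x ->
  (Num.truncn (x * N%:R) <= N)%N ->
  staircase f x = f ((Num.truncn (x * N%:R))%:R / N%:R).
Proof.
move=> x_ge0 le_kN; set k := Num.truncn _.
have xN_ge0 : 0 <= x * N%:R by rewrite mulr_ge0.
have thresholdE i : threshold i x = if (i <= k)%N then 1 else 0.
  by rewrite /threshold ler_pdivrMr ?ltr0n // -(truncn_ge_nat _ xN_ge0).
rewrite /staircase (big_cat_nat (n := k.+1)) //= [X in _ + X]big_nat_cond.
rewrite [X in _ + X]big1 ?addr0 => [|i /andP[/andP[lt_ki _] _]]; last first.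
  by rewrite thresholdE leqNgt lt_ki mulr0.
rewrite -sum_stair_coef; apply: eq_big_nat => i /andP[_ le_ik].
by rewrite thresholdE -ltnS le_ik mulr1.
Qed.

Lemma dist_staircase_le (f : R -> R) (x : R) :
  (forall x y, 0 <= x <= 1 -> 0 <= y <= 1 -> `|f x - f y| <= `|x - y|) ->
  0 <= x <= 1 -> `|f x - staircase f x| <= N%:R^-1.
Proof.
move=> f_lip x01; have le_kN := truncn_grid_le x01.
have /andP[x_ge0 _] := x01.
rewrite staircaseE //; apply: (le_trans (f_lip _ _ x01 (grid_in01 le_kN))).
have xN_ge0 : 0 <= x * N%:R by rewrite mulr_ge0.
have := truncn_itv xN_ge0; rewrite -natr1; set k := Num.truncn _ => /andP[lo hi].
have N_pos : (0 : R) < N%:R by rewrite ltr0n.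
have -> : x - k%:R / N%:R = (x * N%:R - k%:R) / N%:R.
  by rewrite mulrBl mulfK ?gt_eqF.
rewrite normrM (gtr0_norm (x := N%:R^-1)) ?invr_gt0 //.
by apply: ler_piMl; rewrite ?invr_ge0 ?ler0n // ger0_norm ?subr_ge0 //; lra.
Qed.

Lemma norm_stair_coef0_le1 (f : R -> R) : -1 <= f 0 <= 1 -> `|stair_coef f 0| <= 1.
Proof. by rewrite /stair_coef subr0 mul0r ler_norml. Qed.

Lemma norm_stair_coefS_le (f : R -> R) j :
  (forall x y, 0 <= x <= 1 -> 0 <= y <= 1 -> `|f x - f y| <= `|x - y|) ->
  (j < N)%N -> `|stair_coef f j.+1| <= N%:R^-1.
Proof.
move=> f_lip lt_jN; rewrite /stair_coef.
apply: (le_trans (f_lip _ _ (grid_in01 lt_jN) (grid_in01 (ltnW lt_jN)))).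
by rewrite -natr1 mulrDl mul1r addrAC subrr add0r ger0_norm ?invr_ge0.
Qed.

End Staircase.

Lemma lip_class0 (R : realType) : lip_class (fun _ : R => 0).
Proof.
split=> [x y _ _ | x _]; first by rewrite subrr normr0.
by rewrite lerN10 ler01.
Qed.

Section LipschitzPayoff.
Variables (R : realType) (T : nat) (z : nat -> seq bool -> R).
Hypothesis z_tree : is_tree T z.

Definition threshold_mgale (N i : nat) (s : T.-tuple bool) : R :=
  mgale_sum (fun t p => threshold N i (z t p)) s.

Lemma seq_payoff_staircase (f : R -> R) N (s : T.-tuple bool) :
  seq_payoff z f s =
    \sum_(0 <= i < N.+1) stair_coef N f i * threshold_mgale N i s
    + mgale_sum (fun t p => f (z t p) - staircase N f (z t p)) s.
Proof.
rewrite -mgale_sum_lin -mgale_sumD.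
by apply: eq_bigr => t _; rewrite subrKC.
Qed.

Lemma seq_payoff_lip_le (f : R -> R) N (s : T.-tuple bool) :
  (0 < N)%N -> lip_class f ->
  seq_payoff z f s <= `|threshold_mgale N 0 s|
    + N%:R^-1 * \sum_(1 <= i < N.+1) `|threshold_mgale N i s| + T%:R / N%:R.
Proof.
move=> N_gt0 [f_lip f_bnd]; rewrite (seq_payoff_staircase _ N) big_ltn //.
apply: lerD; first apply: lerD.
- apply: (le_trans (ler_norm _)); rewrite normrM ler_piMl //.
  by apply: norm_stair_coef0_le1; apply: f_bnd; rewrite lexx ler01.
- rewrite mulr_sumr; apply: ler_sum_nat => -[//|j] /andP[_ lt_jN].
  apply: (le_trans (ler_norm _)); rewrite normrM ler_wpM2r //.
  exact: norm_stair_coefS_le.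
- apply: (le_trans (ler_norm _)); apply: norm_mgale_sum_le => t p lt_tT size_p.
  exact/dist_staircase_le/z_tree.
Qed.

Lemma sum_norm_threshold_mgale_le N i :
  \sum_(s : T.-tuple bool) `|threshold_mgale N i s| <= 2 ^+ T * Num.sqrt T%:R.
Proof. by apply: sum_norm_mgale_sum_le => t p; apply: norm_threshold_le1. Qed.

Lemma rad_avg_lip_le : (0 < T)%N -> rad_avg (@lip_class R) T z <= 3 * Num.sqrt T%:R.
Proof.
move=> T_gt0; set q := Num.sqrt T%:R.
have q_ge1 : 1 <= q by rewrite -sqrtr1 ler_sqrt // ler1n.
have inner_sup_le (s : T.-tuple bool) : inner_sup (@lip_class R) z s <=
    `|threshold_mgale T 0 s| + T%:R^-1 * \sum_(1 <= i < T.+1) `|threshold_mgale T i s|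
    + T%:R / T%:R.
  apply: ge_sup.
    by exists (seq_payoff z (fun=> 0) s); exists (fun=> 0) => //; apply: lip_class0.
  by move=> _ [f lip_f <-]; apply: seq_payoff_lip_le.
rewrite /rad_avg ler_pdivrMl ?exprn_gt0 //.
apply: (le_trans (ler_sum _ (fun s _ => inner_sup_le s))).
rewrite !big_split /= -mulr_sumr exchange_big /= sum_const_tuple.
have thresholds_le :
    T%:R^-1 * \sum_(1 <= i < T.+1) \sum_(s : T.-tuple bool) `|threshold_mgale T i s|
    <= 2 ^+ T * q.
  rewrite ler_pdivrMl ?ltr0n //.
  have -> : T%:R * (2 ^+ T * q) = \sum_(1 <= i < T.+1) (2 ^+ T * q).
    by rewrite sumr_const_nat subSS subn0 mulr_natl.
  by apply: ler_sum_nat => i _; apply: sum_norm_threshold_mgale_le.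
have := sum_norm_threshold_mgale_le T 0.
have := ler_wpM2l (exprn_ge0 T (ler0n R 2)) q_ge1.
rewrite mulfV ?pnatr_eq0 -?lt0n // mulr1 -/q; lra.
Qed.

End LipschitzPayoff.

Theorem lemma5 (R : realType) :
  exists C : R, forall T : nat, (0 < T)%N ->
    @seq_rademacher R (@lip_class R) T <= C * Num.sqrt (T%:R).
Proof.
exists 3 => T T_gt0; apply: ge_sup.
  exists (rad_avg (@lip_class R) T (fun _ _ => 0)), (fun _ _ => 0) => //.
  by move=> t s _ _; rewrite lexx ler01.
by move=> _ [z z_tree <-]; apply: rad_avg_lip_le.
Qed.
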